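(* Let $\Omega\subseteq\mathbb{C}$ be a domain with $\Omega=\{\bar z:z\in\Omega\}$, $\Omega^+=\Omega\cap\{\mathrm{Im}z>0\}$, $\Omega^-=\Omega\cap\{\mathrm{Im}z<0\}$, $I=\Omega\cap\mathbb{R}$. Let $\mathcal P$ be a totally geodesic vertical plane of $\mathbb{H}^2\times\mathbb{R}$ (the product of a geodesic of $\mathbb{H}^2$ with $\mathbb{R}$) and $\sigma$ the isometric reflection of $\mathbb{H}^2\times\mathbb{R}$ across $\mathcal P$. Let $\psi:\Omega^+\cup I\to\mathbb{H}^2\times\mathbb{R}$ be a conformal $C^2$ immersion with regular vertical projection and constant mean curvature $1/2$, such that $\psi(I)\subset\mathcal P$ and the unit normal $\eta$ of $\psi$ is tangent to $\mathcal P$ along $I$. Then the map defined by $\psi(z)$ for $z\in\Omega^+\cup I$ and $\sigma(\psi(\bar z))$ for $z\in\Omega^-$ is a conformal immersion $\Omega\to\mathbb{H}^2\times\mathbb{R}$ with constant mean curvature $1/2$.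
   Context: $\mathbb{H}^2\times\mathbb{R}\subset\mathbb{L}^4=(\mathbb{R}^4,-dx_0^2+dx_1^2+dx_2^2+dx_3^2)$, $\mathbb{H}^2=\{-x_0^2+x_1^2+x_2^2=-1,x_0>0\}$. For a conformal immersion $\psi=(N,h)$, $\eta=(\hat N,u)$ denotes the unit normal tangent to $\mathbb{H}^2\times\mathbb{R}$; regular vertical projection means $u\ne0$ everywhere, and the mean curvature is taken with respect to the orientation $u>0$. *)

From Stdlib Require Export Reals.
From Coquelicot Require Export Coquelicot.
Open Scope R_scope.

(** Points/vectors of L^4 = (R^4, -dx0^2+dx1^2+dx2^2+dx3^2). *)
Record V4 := mk4 { c0 : R; c1 : R; c2 : R; c3 : R }.

Definition lor (v w : V4) : R :=
  - c0 v * c0 w + c1 v * c1 w + c2 v * c2 w + c3 v * c3 w.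

Definition vadd (v w : V4) : V4 :=
  mk4 (c0 v + c0 w) (c1 v + c1 w) (c2 v + c2 w) (c3 v + c3 w).
Definition vscal (k : R) (v : V4) : V4 :=
  mk4 (k * c0 v) (k * c1 v) (k * c2 v) (k * c3 v).

Definition in_H2xR (p : V4) : Prop :=
  - c0 p ^ 2 + c1 p ^ 2 + c2 p ^ 2 = -1 /\ 0 < c0 p.

(** The H^2-component N of p, viewed in L^4 (the normal of H^2 x R at p). *)
Definition Nvec (p : V4) : V4 := mk4 (c0 p) (c1 p) (c2 p) 0.

(** Plane topology on C = R^2 (z = x + i y represented by (x,y)). *)
Definition open2 (U : R -> R -> Prop) : Prop :=
  forall x y, U x y -> exists e, 0 < e /\
    forall x' y', Rabs (x' - x) < e -> Rabs (y' - y) < e -> U x' y'.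

Definition connected2 (U : R -> R -> Prop) : Prop :=
  ~ (exists A B : R -> R -> Prop, open2 A /\ open2 B /\
       (forall x y, U x y -> A x y \/ B x y) /\
       (forall x y, U x y -> A x y -> B x y -> False) /\
       (exists x y, U x y /\ A x y) /\ (exists x y, U x y /\ B x y)).

Definition is_domain (U : R -> R -> Prop) : Prop :=
  open2 U /\ connected2 U /\ exists x y, U x y.

Definition cont2 (g : R -> R -> R) (x y : R) : Prop :=
  forall e, 0 < e -> exists d, 0 < d /\
    forall x' y', Rabs (x' - x) < d -> Rabs (y' - y) < d ->
      Rabs (g x' y' - g x y) < e.

Definition dx (g : R -> R -> R) : R -> R -> R :=
  fun x y => Derive (fun t => g t y) x.
Definition dy (g : R -> R -> R) : R -> R -> R :=
  fun x y => Derive (fun t => g x t) y.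
Definition exdx (g : R -> R -> R) (x y : R) : Prop := ex_derive (fun t => g t y) x.
Definition exdy (g : R -> R -> R) (x y : R) : Prop := ex_derive (fun t => g x t) y.

Definition C2 (g : R -> R -> R) (U : R -> R -> Prop) : Prop :=
  forall x y, U x y ->
    exdx g x y /\ exdy g x y /\
    exdx (dx g) x y /\ exdy (dx g) x y /\ exdx (dy g) x y /\ exdy (dy g) x y /\
    cont2 g x y /\ cont2 (dx g) x y /\ cont2 (dy g) x y /\
    cont2 (dx (dx g)) x y /\ cont2 (dy (dx g)) x y /\
    cont2 (dx (dy g)) x y /\ cont2 (dy (dy g)) x y.

Definition cmp0 (f : R -> R -> V4) := fun x y => c0 (f x y).
Definition cmp1 (f : R -> R -> V4) := fun x y => c1 (f x y).
Definition cmp2 (f : R -> R -> V4) := fun x y => c2 (f x y).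
Definition cmp3 (f : R -> R -> V4) := fun x y => c3 (f x y).

Definition C2V (f : R -> R -> V4) (U : R -> R -> Prop) : Prop :=
  C2 (cmp0 f) U /\ C2 (cmp1 f) U /\ C2 (cmp2 f) U /\ C2 (cmp3 f) U.

Definition DX (f : R -> R -> V4) (x y : R) : V4 :=
  mk4 (dx (cmp0 f) x y) (dx (cmp1 f) x y) (dx (cmp2 f) x y) (dx (cmp3 f) x y).
Definition DY (f : R -> R -> V4) (x y : R) : V4 :=
  mk4 (dy (cmp0 f) x y) (dy (cmp1 f) x y) (dy (cmp2 f) x y) (dy (cmp3 f) x y).
Definition LapV (f : R -> R -> V4) (x y : R) : V4 :=
  mk4 (dx (dx (cmp0 f)) x y + dy (dy (cmp0 f)) x y)
      (dx (dx (cmp1 f)) x y + dy (dy (cmp1 f)) x y)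
      (dx (dx (cmp2 f)) x y + dy (dy (cmp2 f)) x y)
      (dx (dx (cmp3 f)) x y + dy (dy (cmp3 f)) x y).

Definition conformal_immersion_at (f : R -> R -> V4) (x y : R) : Prop :=
  in_H2xR (f x y) /\
  lor (DX f x y) (DX f x y) = lor (DY f x y) (DY f x y) /\
  lor (DX f x y) (DY f x y) = 0 /\
  0 < lor (DX f x y) (DX f x y).

(** n = (hat N, u) is a unit normal of f at (x,y), tangent to H^2 x R. *)
Definition unit_normal (f : R -> R -> V4) (x y : R) (n : V4) : Prop :=
  lor n (Nvec (f x y)) = 0 /\ lor n n = 1 /\
  lor n (DX f x y) = 0 /\ lor n (DY f x y) = 0.

(** Regular vertical projection at (x,y): u <> 0. *)
Definition regular_vertical_projection_at (f : R -> R -> V4) (x y : R) : Prop :=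
  forall n, unit_normal f x y n -> c3 n <> 0.

(** Mean curvature H at (x,y) w.r.t. the unit normal with u > 0:
    H = (1/2) trace II, i.e. <psi_xx + psi_yy, eta> = 2 lambda^2 H with
    lambda^2 = <psi_x, psi_x> (conformal factor). *)
Definition mean_curvature_up_at (f : R -> R -> V4) (H x y : R) : Prop :=
  exists n, unit_normal f x y n /\ 0 < c3 n /\
    lor (LapV f x y) n = 2 * lor (DX f x y) (DX f x y) * H.

(** Totally geodesic vertical plane P = gamma x R, gamma = H^2 cap a^perp,
    a a spacelike unit vector of L^3 (embedded with c3 a = 0). *)
Definition vertical_plane (a : V4) : Prop := c3 a = 0 /\ lor a a = 1.
Definition in_plane (a p : V4) : Prop := in_H2xR p /\ lor p a = 0.
Definition sigma (a p : V4) : V4 := vadd p (vscal (-2 * lor p a) a).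

Definition reflected (a : V4) (psi : R -> R -> V4) : R -> R -> V4 :=
  fun x y => if Rle_dec 0 y then psi x y else sigma a (psi x (- y)).

(** Off the real axis the reflected map is either [psi] or [sigma o psi o conj], and
    [sigma] is a Lorentz isometry fixing the vertical direction: it preserves
    conformality, maps the upward unit normal to the upward unit normal and commutes
    with the Laplacian, so the mean curvature is unchanged.  The whole difficulty is
    the C^2 regularity across the axis [I], i.e. matching, coordinate by coordinate,
    the one-sided 2-jets of [psi] and of [sigma (psi (x, - y))] along [I].
    Since [psi(I)] lies in the plane fixed by [sigma], values and [x]-derivatives
    agree.  On [I] the vector [psi_y] is Lorentz-orthogonal to [psi_x], to the normal
    [eta], to the normal [N] of [H^2 x R], and (after removing its [a]-component) to
    [a]; these four vectors form a nondegenerate orthogonal frame, so [psi_y] is a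
    multiple of [a] and [sigma] negates it, which compensates the sign coming from
    [y |-> - y].  Differentiating the conformality relations gives
    [<Delta psi, psi_y> = 0], hence [Delta psi] and then [psi_yy] are orthogonal to
    [a], so [sigma] fixes [psi_yy].  The mixed derivatives follow by differentiating
    along [I] and by Schwarz's theorem. *)

From Stdlib Require Import Lra Psatz FunctionalExtensionality.

Lemma locally_ball (P : R -> Prop) x e :
  0 < e -> (forall t, Rabs (t - x) < e -> P t) -> locally x P.
Proof. intros He H. exists (mkposreal e He). exact H. Qed.

Lemma is_derive_right_const (f : R -> R) t0 l e :
  is_derive f t0 l -> 0 < e -> (forall s, t0 <= s < t0 + e -> f s = f t0) -> l = 0.
Proof.
  intros Hd He Hc. apply is_derive_Reals in Hd.
  destruct (Req_dec l 0) as [|Hl]; [assumption|exfalso].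
  destruct (Hd (Rabs l) (Rabs_pos_lt l Hl)) as [d Hdd].
  set (h := Rmin (d / 2) (e / 2)).
  assert (Hh : 0 < h) by (apply Rmin_pos; pose proof (cond_pos d); lra).
  assert (Hhd : h <= d / 2) by apply Rmin_l.
  assert (Hhe : h <= e / 2) by apply Rmin_r.
  specialize (Hdd h ltac:(lra) ltac:(rewrite Rabs_pos_eq; lra)).
  rewrite (Hc (t0 + h)) in Hdd by lra.
  replace ((f t0 - f t0) / h - l) with (- l) in Hdd by (field; lra).
  rewrite Rabs_Ropp in Hdd. lra.
Qed.

Lemma is_derive_seam (A B : R -> R) l :
  is_derive A 0 l -> is_derive B 0 l -> A 0 = B 0 ->
  is_derive (fun t => if Rle_dec 0 t then A t else B t) 0 l.
Proof.
  intros HA HB H0. apply is_derive_Reals in HA, HB. apply is_derive_Reals.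
  intros eps He. destruct (HA eps He) as [d1 Hd1], (HB eps He) as [d2 Hd2].
  exists (mkposreal _ (Rmin_pos _ _ (cond_pos d1) (cond_pos d2))).
  intros h hne hlt; simpl in hlt.
  pose proof (Rmin_l d1 d2); pose proof (Rmin_r d1 d2).
  destruct (Rle_dec 0 0) as [_|]; [|lra].
  destruct (Rle_dec 0 (0 + h)); [apply Hd1|rewrite H0; apply Hd2]; auto; lra.
Qed.

Lemma is_derive_Rplus (f g : R -> R) x a b :
  is_derive f x a -> is_derive g x b -> is_derive (fun t => f t + g t) x (a + b).
Proof. intros Hf Hg. exact (is_derive_plus f g x a b Hf Hg). Qed.

Lemma is_derive_Rmult (f g : R -> R) x a b :
  is_derive f x a -> is_derive g x b -> is_derive (fun t => f t * g t) x (a * g x + f x * b).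
Proof. intros Hf Hg. exact (is_derive_mult f g x a b Hf Hg Rmult_comm). Qed.

Definition eq_near (f g : R -> R -> R) x y := exists e, 0 < e /\
  forall x' y', Rabs (x' - x) < e -> Rabs (y' - y) < e -> f x' y' = g x' y'.

Lemma eq_near_open (O : R -> R -> Prop) f g x y :
  open2 O -> O x y -> (forall x y, O x y -> f x y = g x y) -> eq_near f g x y.
Proof. intros HO Hxy H. destruct (HO x y Hxy) as [e [He Hb]]. exists e; auto. Qed.

Lemma eq_near_sym f g x y : eq_near f g x y -> eq_near g f x y.
Proof. intros [e [He H]]. exists e; split; auto. intros; symmetry; auto. Qed.

Lemma eq_near_trans f g h x y : eq_near f g x y -> eq_near g h x y -> eq_near f h x y.
Proof.
  intros [e1 [He1 H1]] [e2 [He2 H2]]. exists (Rmin e1 e2); split; [apply Rmin_pos; auto|].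
  intros x' y' ? ?. pose proof (Rmin_l e1 e2); pose proof (Rmin_r e1 e2).
  rewrite H1, H2; auto; lra.
Qed.

Lemma eq_near_at f g x y : eq_near f g x y -> f x y = g x y.
Proof. intros [e [He H]]. apply H; rewrite Rminus_diag, Rabs_R0; lra. Qed.

Lemma eq_near_nearby f g x y : eq_near f g x y -> exists e, 0 < e /\
  forall x' y', Rabs (x' - x) < e -> Rabs (y' - y) < e -> eq_near f g x' y'.
Proof.
  intros [e [He H]]. exists (e / 2); split; [lra|].
  intros x' y' H1 H2. exists (e / 2); split; [lra|].
  intros x'' y'' H3 H4. apply H.
  - replace (x'' - x) with ((x'' - x') + (x' - x)) by ring.
    eapply Rle_lt_trans; [apply Rabs_triang|lra].
  - replace (y'' - y) with ((y'' - y') + (y' - y)) by ring.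
    eapply Rle_lt_trans; [apply Rabs_triang|lra].
Qed.

Lemma eq_near_locally_x f g x y :
  eq_near f g x y -> locally x (fun t => f t y = g t y).
Proof.
  intros [e [He H]]. apply (locally_ball _ _ e He). intros t Ht.
  apply H; auto. rewrite Rminus_diag, Rabs_R0; lra.
Qed.

Lemma eq_near_locally_y f g x y :
  eq_near f g x y -> locally y (fun t => f x t = g x t).
Proof.
  intros [e [He H]]. apply (locally_ball _ _ e He). intros t Ht.
  apply H; auto. rewrite Rminus_diag, Rabs_R0; lra.
Qed.

Lemma eq_near_dx f g x y : eq_near f g x y -> dx f x y = dx g x y.
Proof. intros H. apply Derive_ext_loc, eq_near_locally_x, H. Qed.

Lemma eq_near_dy f g x y : eq_near f g x y -> dy f x y = dy g x y.
Proof. intros H. apply Derive_ext_loc, eq_near_locally_y, H. Qed.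

Lemma eq_near_exdx f g x y : eq_near f g x y -> exdx f x y -> exdx g x y.
Proof. intros H. apply ex_derive_ext_loc, eq_near_locally_x, H. Qed.

Lemma eq_near_exdy f g x y : eq_near f g x y -> exdy f x y -> exdy g x y.
Proof. intros H. apply ex_derive_ext_loc, eq_near_locally_y, H. Qed.

Lemma eq_near_dx_near f g x y : eq_near f g x y -> eq_near (dx f) (dx g) x y.
Proof.
  intros H. destruct (eq_near_nearby _ _ _ _ H) as [e [He H']].
  exists e; split; auto. intros. apply eq_near_dx, H'; auto.
Qed.

Lemma eq_near_dy_near f g x y : eq_near f g x y -> eq_near (dy f) (dy g) x y.
Proof.
  intros H. destruct (eq_near_nearby _ _ _ _ H) as [e [He H']].
  exists e; split; auto. intros. apply eq_near_dy, H'; auto.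
Qed.

Lemma eq_near_cont2 f g x y : eq_near f g x y -> cont2 f x y -> cont2 g x y.
Proof.
  intros [e0 [He0 H]] Hc eps Heps. destruct (Hc eps Heps) as [d [Hd Hd2]].
  exists (Rmin d e0). split; [apply Rmin_pos; auto|]. intros x' y' H1 H2.
  pose proof (Rmin_l d e0); pose proof (Rmin_r d e0).
  rewrite <- (H x' y'), <- (H x y) by (rewrite ?Rminus_diag, ?Rabs_R0; lra).
  apply Hd2; lra.
Qed.

Lemma cont2_plus f g x y :
  cont2 f x y -> cont2 g x y -> cont2 (fun x y => f x y + g x y) x y.
Proof.
  intros Hf Hg eps He.
  destruct (Hf (eps / 2)) as [d1 [Hd1 D1]]; [lra|].
  destruct (Hg (eps / 2)) as [d2 [Hd2 D2]]; [lra|].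
  exists (Rmin d1 d2). split; [apply Rmin_pos; auto|]. intros x' y' h1 h2.
  pose proof (Rmin_l d1 d2); pose proof (Rmin_r d1 d2).
  specialize (D1 x' y' ltac:(lra) ltac:(lra)). specialize (D2 x' y' ltac:(lra) ltac:(lra)).
  replace (f x' y' + g x' y' - (f x y + g x y))
    with ((f x' y' - f x y) + (g x' y' - g x y)) by ring.
  eapply Rle_lt_trans; [apply Rabs_triang|lra].
Qed.

Lemma cont2_scal k f x y : cont2 f x y -> cont2 (fun x y => k * f x y) x y.
Proof.
  intros Hf eps He.
  assert (Hk : 0 < Rabs k + 1) by (pose proof (Rabs_pos k); lra).
  destruct (Hf (eps / (Rabs k + 1))) as [d [Hd D]]; [apply Rdiv_lt_0_compat; lra|].
  exists d; split; auto. intros x' y' h1 h2. specialize (D x' y' h1 h2).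
  replace (k * f x' y' - k * f x y) with (k * (f x' y' - f x y)) by ring.
  rewrite Rabs_mult.
  apply Rle_lt_trans with ((Rabs k + 1) * Rabs (f x' y' - f x y)).
  - apply Rmult_le_compat_r; [apply Rabs_pos|lra].
  - apply Rmult_lt_compat_l with (r := Rabs k + 1) in D; auto.
    replace ((Rabs k + 1) * (eps / (Rabs k + 1))) with eps in D by (field; lra). exact D.
Qed.

Definition C2_at (g : R -> R -> R) (x y : R) : Prop :=
  exdx g x y /\ exdy g x y /\
  exdx (dx g) x y /\ exdy (dx g) x y /\ exdx (dy g) x y /\ exdy (dy g) x y /\
  cont2 g x y /\ cont2 (dx g) x y /\ cont2 (dy g) x y /\
  cont2 (dx (dx g)) x y /\ cont2 (dy (dx g)) x y /\
  cont2 (dx (dy g)) x y /\ cont2 (dy (dy g)) x y.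

Lemma eq_near_C2_at f g x y : eq_near f g x y -> C2_at f x y -> C2_at g x y.
Proof.
  intros H (h1&h2&h3&h4&h5&h6&h7&h8&h9&h10&h11&h12&h13).
  pose proof (eq_near_dx_near _ _ _ _ H) as Hx. pose proof (eq_near_dy_near _ _ _ _ H) as Hy.
  pose proof (eq_near_dx_near _ _ _ _ Hx) as Hxx. pose proof (eq_near_dy_near _ _ _ _ Hx) as Hyx.
  pose proof (eq_near_dx_near _ _ _ _ Hy) as Hxy. pose proof (eq_near_dy_near _ _ _ _ Hy) as Hyy.
  repeat split;
    match goal with
    | |- exdx _ _ _ => eapply eq_near_exdx; [eassumption|assumption]
    | |- exdy _ _ _ => eapply eq_near_exdy; [eassumption|assumption]
    | |- cont2 _ _ _ => eapply eq_near_cont2; [eassumption|assumption]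
    end.
Qed.

Lemma dy_dx_comm g (U : R -> R -> Prop) x y :
  open2 U -> C2 g U -> U x y -> dy (dx g) x y = dx (dy g) x y.
Proof.
  intros HU HC Hu. symmetry. apply Schwarz.
  - destruct (HU x y Hu) as [e [He Hb]]. exists (mkposreal e He). intros u v h1 h2.
    destruct (HC u v (Hb u v h1 h2)) as (? & ? & ? & ? & ? & _). auto.
  - destruct (HC x y Hu) as (_&_&_&_&_&_&_&_&_&_&_&Hc&_).
    intros eps. destruct (Hc eps (cond_pos eps)) as [d [Hd H]]. exists (mkposreal d Hd). exact H.
  - destruct (HC x y Hu) as (_&_&_&_&_&_&_&_&_&_&Hc&_).
    intros eps. destruct (Hc eps (cond_pos eps)) as [d [Hd H]]. exists (mkposreal d Hd). exact H.
Qed.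

(** * Gluing two functions along the real axis *)

Definition glue (h k : R -> R -> R) : R -> R -> R :=
  fun x y => if Rle_dec 0 y then h x y else k x y.

Lemma glue_pos h k x y : 0 <= y -> glue h k x y = h x y.
Proof. intros. unfold glue. destruct (Rle_dec 0 y); [reflexivity|lra]. Qed.

Lemma glue_neg h k x y : y < 0 -> glue h k x y = k x y.
Proof. intros. unfold glue. destruct (Rle_dec 0 y); [lra|reflexivity]. Qed.

Lemma dx_glue h k : dx (glue h k) = glue (dx h) (dx k).
Proof.
  apply functional_extensionality; intro x; apply functional_extensionality; intro y.
  unfold dx, glue. destruct (Rle_dec 0 y); reflexivity.
Qed.

Lemma exdx_glue h k x y :
  (0 <= y -> exdx h x y) -> (y <= 0 -> exdx k x y) -> exdx (glue h k) x y.
Proof.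
  intros Hh Hk. unfold exdx, glue. destruct (Rle_dec 0 y); [apply Hh|apply Hk]; lra.
Qed.

Lemma glue_eq_near_pos h k x y : 0 < y -> eq_near h (glue h k) x y.
Proof.
  intros Hy. exists y; split; auto. intros x' y' _ H.
  apply Rabs_def2 in H. rewrite glue_pos; auto; lra.
Qed.

Lemma glue_eq_near_neg h k x y : y < 0 -> eq_near k (glue h k) x y.
Proof.
  intros Hy. exists (- y); split; [lra|]. intros x' y' _ H.
  apply Rabs_def2 in H. rewrite glue_neg; auto; lra.
Qed.

Lemma cont2_glue h k x y :
  (0 <= y -> cont2 h x y) -> (y <= 0 -> cont2 k x y) -> (y = 0 -> h x 0 = k x 0) ->
  cont2 (glue h k) x y.
Proof.
  intros Hh Hk H0. destruct (Rtotal_order 0 y) as [Hy|[<-|Hy]].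
  - apply (eq_near_cont2 _ _ _ _ (glue_eq_near_pos h k x y Hy)), Hh; lra.
  - intros eps He.
    destruct (Hh (Rle_refl 0) eps He) as [d1 [Hd1 D1]].
    destruct (Hk (Rle_refl 0) eps He) as [d2 [Hd2 D2]].
    exists (Rmin d1 d2); split; [apply Rmin_pos; auto|]. intros x' y' h1 h2.
    pose proof (Rmin_l d1 d2); pose proof (Rmin_r d1 d2).
    rewrite (glue_pos h k x 0) by lra. unfold glue. destruct (Rle_dec 0 y').
    + apply D1; lra.
    + rewrite H0 by reflexivity. apply D2; lra.
  - apply (eq_near_cont2 _ _ _ _ (glue_eq_near_neg h k x y Hy)), Hk; lra.
Qed.

Lemma is_derive_glue_y h k x y :
  (0 <= y -> exdy h x y) -> (y <= 0 -> exdy k x y) ->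
  (y = 0 -> h x 0 = k x 0 /\ dy h x 0 = dy k x 0) ->
  is_derive (fun t => glue h k x t) y (glue (dy h) (dy k) x y).
Proof.
  intros Hh Hk H0. destruct (Rtotal_order 0 y) as [Hy|[<-|Hy]].
  - rewrite glue_pos by lra.
    apply (is_derive_ext_loc (fun t => h x t)).
    + apply eq_near_locally_y, glue_eq_near_pos, Hy.
    + apply Derive_correct, Hh; lra.
  - rewrite glue_pos by lra. destruct (H0 eq_refl) as [Hv Hd].
    apply (is_derive_seam (fun t => h x t) (fun t => k x t)); auto.
    + apply Derive_correct, Hh; lra.
    + rewrite Hd. apply Derive_correct, Hk; lra.
  - rewrite glue_neg by lra.
    apply (is_derive_ext_loc (fun t => k x t)).
    + apply eq_near_locally_y, glue_eq_near_neg, Hy.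
    + apply Derive_correct, Hk; lra.
Qed.

Lemma dy_glue_near (O : R -> R -> Prop) h k x y : open2 O -> O x y ->
  (forall x y, O x y -> 0 <= y -> exdy h x y) -> (forall x y, O x y -> y <= 0 -> exdy k x y) ->
  (forall x, O x 0 -> h x 0 = k x 0) -> (forall x, O x 0 -> dy h x 0 = dy k x 0) ->
  eq_near (dy (glue h k)) (glue (dy h) (dy k)) x y.
Proof.
  intros HO Hxy Hh Hk H0 H1. apply (eq_near_open O); [exact HO|exact Hxy|].
  intros x' y' Hxy'. apply is_derive_unique, is_derive_glue_y.
  - apply Hh, Hxy'.
  - apply Hk, Hxy'.
  - intros ->. split; [apply H0|apply H1]; exact Hxy'.
Qed.

Definition seam_agree (h k : R -> R -> R) x :=
  h x 0 = k x 0 /\ dx h x 0 = dx k x 0 /\ dy h x 0 = dy k x 0 /\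
  dx (dx h) x 0 = dx (dx k) x 0 /\ dy (dx h) x 0 = dy (dx k) x 0 /\
  dx (dy h) x 0 = dx (dy k) x 0 /\ dy (dy h) x 0 = dy (dy k) x 0.

Section GlueC2.

Variables (O : R -> R -> Prop) (h k : R -> R -> R).
Hypotheses (HO : open2 O) (Hh : forall x y, O x y -> 0 <= y -> C2_at h x y)
  (Hk : forall x y, O x y -> y <= 0 -> C2_at k x y) (Hseam : forall x, O x 0 -> seam_agree h k x).

Lemma glue_dy_near x y : O x y ->
  eq_near (dy (glue h k)) (glue (dy h) (dy k)) x y /\
  eq_near (dy (dx (glue h k))) (glue (dy (dx h)) (dy (dx k))) x y /\
  eq_near (dy (dy (glue h k))) (glue (dy (dy h)) (dy (dy k))) x y.
Proof.
  intros Hxy. rewrite dx_glue.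
  assert (Ey : forall x y, O x y -> eq_near (dy (glue h k)) (glue (dy h) (dy k)) x y).
  { intros x' y' H'. apply (dy_glue_near O); [exact HO|exact H'| | | |].
    - intros x1 y1 H1 Hy1. destruct (Hh x1 y1 H1 Hy1) as (_&?&_). assumption.
    - intros x1 y1 H1 Hy1. destruct (Hk x1 y1 H1 Hy1) as (_&?&_). assumption.
    - intros x1 H1. destruct (Hseam x1 H1) as (?&_). assumption.
    - intros x1 H1. destruct (Hseam x1 H1) as (_&_&?&_). assumption. }
  split; [|split]; [exact (Ey x y Hxy)| |eapply eq_near_trans; [apply eq_near_dy_near, Ey, Hxy|]];
    apply (dy_glue_near O); try assumption.
  - intros x1 y1 H1 Hy1. destruct (Hh x1 y1 H1 Hy1) as (_&_&_&?&_). assumption.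
  - intros x1 y1 H1 Hy1. destruct (Hk x1 y1 H1 Hy1) as (_&_&_&?&_). assumption.
  - intros x1 H1. destruct (Hseam x1 H1) as (_&?&_). assumption.
  - intros x1 H1. destruct (Hseam x1 H1) as (_&_&_&_&?&_). assumption.
  - intros x1 y1 H1 Hy1. destruct (Hh x1 y1 H1 Hy1) as (_&_&_&_&_&?&_). assumption.
  - intros x1 y1 H1 Hy1. destruct (Hk x1 y1 H1 Hy1) as (_&_&_&_&_&?&_). assumption.
  - intros x1 H1. destruct (Hseam x1 H1) as (_&_&?&_). assumption.
  - intros x1 H1. destruct (Hseam x1 H1) as (_&_&_&_&_&_&?). assumption.
Qed.

Lemma C2_at_glue_axis x : O x 0 -> C2_at (glue h k) x 0.
Proof.
  intros Hx. destruct (glue_dy_near x 0 Hx) as (Ey & Eyx & Eyy).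
  assert (Exy : eq_near (dx (dy (glue h k))) (glue (dx (dy h)) (dx (dy k))) x 0)
    by (rewrite <- dx_glue; apply eq_near_dx_near, Ey).
  destruct (Hseam x Hx) as (s0&s1&s2&s3&s4&s5&s6).
  destruct (Hh x 0 Hx (Rle_refl 0)) as (h1&h2&h3&h4&h5&h6&h7&h8&h9&h10&h11&h12&h13).
  destruct (Hk x 0 Hx (Rle_refl 0)) as (k1&k2&k3&k4&k5&k6&k7&k8&k9&k10&k11&k12&k13).
  assert (Hdx : forall H K, exdx H x 0 -> exdx K x 0 -> exdx (glue H K) x 0)
    by (intros H K ? ?; apply exdx_glue; intros; assumption).
  assert (Hdy : forall H K, exdy H x 0 -> exdy K x 0 -> H x 0 = K x 0 ->
    dy H x 0 = dy K x 0 -> exdy (glue H K) x 0)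
    by (intros H K ? ? ? ?; eexists; apply is_derive_glue_y; intros; auto).
  assert (Hc : forall H K, cont2 H x 0 -> cont2 K x 0 -> H x 0 = K x 0 -> cont2 (glue H K) x 0)
    by (intros H K ? ? ?; apply cont2_glue; intros; assumption).
  repeat split.
  - apply Hdx; assumption.
  - apply Hdy; assumption.
  - rewrite dx_glue. apply Hdx; assumption.
  - rewrite dx_glue. apply Hdy; assumption.
  - eapply eq_near_exdx; [apply eq_near_sym, Ey|]. apply Hdx; assumption.
  - eapply eq_near_exdy; [apply eq_near_sym, Ey|]. apply Hdy; assumption.
  - apply Hc; assumption.
  - rewrite dx_glue. apply Hc; assumption.
  - eapply eq_near_cont2; [apply eq_near_sym, Ey|]. apply Hc; assumption.
  - rewrite !dx_glue. apply Hc; assumption.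
  - eapply eq_near_cont2; [apply eq_near_sym, Eyx|]. apply Hc; assumption.
  - eapply eq_near_cont2; [apply eq_near_sym, Exy|]. apply Hc; assumption.
  - eapply eq_near_cont2; [apply eq_near_sym, Eyy|]. apply Hc; assumption.
Qed.

Lemma C2_glue : C2 (glue h k) O /\ forall x y, O x y ->
  dy (glue h k) x y = glue (dy h) (dy k) x y /\
  dy (dy (glue h k)) x y = glue (dy (dy h)) (dy (dy k)) x y.
Proof.
  split.
  - intros x y Hxy. destruct (Rtotal_order 0 y) as [Hy|[<-|Hy]].
    + apply (eq_near_C2_at _ _ _ _ (glue_eq_near_pos h k x y Hy)), Hh; [exact Hxy|lra].
    + apply C2_at_glue_axis, Hxy.
    + apply (eq_near_C2_at _ _ _ _ (glue_eq_near_neg h k x y Hy)), Hk; [exact Hxy|lra].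
  - intros x y Hxy. destruct (glue_dy_near x y Hxy) as (Ey & _ & Eyy).
    split; apply eq_near_at; assumption.
Qed.

End GlueC2.

Lemma axis_dx_eq (O : R -> R -> Prop) f g :
  open2 O -> (forall t, O t 0 -> f t 0 = g t 0) -> forall t, O t 0 -> dx f t 0 = dx g t 0.
Proof.
  intros HO H t Ht. destruct (HO t 0 Ht) as [e [He Hb]].
  apply Derive_ext_loc, (locally_ball _ _ e He). intros s Hs.
  apply H, Hb; [assumption|rewrite Rminus_diag, Rabs_R0; lra].
Qed.

Lemma seam_agree_of (O : R -> R -> Prop) h k x : open2 O -> O x 0 ->
  (forall t, O t 0 -> h t 0 = k t 0 /\ dy h t 0 = dy k t 0) ->
  dy (dy h) x 0 = dy (dy k) x 0 ->
  dy (dx h) x 0 = dx (dy h) x 0 -> dy (dx k) x 0 = dx (dy k) x 0 ->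
  seam_agree h k x.
Proof.
  intros HO Hx Hax Hyy Hh Hk.
  assert (E0 : forall t, O t 0 -> h t 0 = k t 0) by (intros; apply Hax; assumption).
  assert (E1 : forall t, O t 0 -> dy h t 0 = dy k t 0) by (intros; apply Hax; assumption).
  pose proof (axis_dx_eq O _ _ HO E0) as Ex.
  pose proof (axis_dx_eq O _ _ HO E1) as Exy.
  unfold seam_agree. rewrite Hh, Hk.
  repeat split; auto. apply (axis_dx_eq O _ _ HO Ex x Hx).
Qed.

(** * Reflecting the second variable *)

(* The sign [s] lets [dy] of a mirrored function be again a mirrored function. *)
Definition mirror (s : R) (k : R -> R -> R) : R -> R -> R := fun x y => s * k x (- y).

Lemma open2_mirror (U : R -> R -> Prop) : open2 U -> open2 (fun x y => U x (- y)).
Proof.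
  intros HU x y Hxy. destruct (HU x (- y) Hxy) as [e [He Hb]]. exists e; split; auto.
  intros x' y' H1 H2. apply Hb; auto.
  replace (- y' - - y) with (- (y' - y)) by ring. rewrite Rabs_Ropp; auto.
Qed.

Lemma dx_mirror s k : dx (mirror s k) = mirror s (dx k).
Proof.
  apply functional_extensionality; intro x; apply functional_extensionality; intro y.
  apply Derive_scal.
Qed.

Lemma exdx_mirror s k x y : exdx k x (- y) -> exdx (mirror s k) x y.
Proof. apply ex_derive_scal. Qed.

Lemma is_derive_mirror_y s k x y :
  exdy k x (- y) -> is_derive (fun t => mirror s k x t) y (mirror (- s) (dy k) x y).
Proof.
  intros H. apply Derive_correct in H.
  pose proof (is_derive_comp (fun t => k x t) Ropp y _ (-1) H
                (is_derive_opp _ _ _ (is_derive_id y))) as Hc.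
  unfold mirror. replace (- s * dy k x (- y)) with (s * scal (-1) (dy k x (- y))).
  - apply is_derive_scal, Hc.
  - unfold scal; simpl; unfold mult; simpl. ring.
Qed.

Lemma cont2_mirror s k x y : cont2 k x (- y) -> cont2 (mirror s k) x y.
Proof.
  intros H. apply (cont2_scal s (fun x y => k x (- y))).
  intros eps He. destruct (H eps He) as [d [Hd H2]]. exists d; split; auto.
  intros x' y' h1 h2. apply H2; auto.
  replace (- y' - - y) with (- (y' - y)) by ring. rewrite Rabs_Ropp; auto.
Qed.

Lemma dy_mirror_near (U : R -> R -> Prop) s k x y : open2 U ->
  (forall x y, U x y -> exdy k x y) -> U x (- y) ->
  eq_near (dy (mirror s k)) (mirror (- s) (dy k)) x y.
Proof.
  intros HU Hk Hxy. apply (eq_near_open _ _ _ _ _ (open2_mirror U HU) Hxy).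
  intros x' y' H'. apply is_derive_unique, is_derive_mirror_y, Hk, H'.
Qed.

Lemma C2_mirror (U : R -> R -> Prop) s k : open2 U -> C2 k U ->
  C2 (mirror s k) (fun x y => U x (- y)) /\ forall x y, U x (- y) ->
    dy (mirror s k) x y = mirror (- s) (dy k) x y /\
    dy (dy (mirror s k)) x y = mirror s (dy (dy k)) x y.
Proof.
  intros HU Hk.
  assert (Ey : forall s' g, (forall x y, U x y -> exdy g x y) -> forall x y, U x (- y) ->
    eq_near (dy (mirror s' g)) (mirror (- s') (dy g)) x y)
    by (intros; apply (dy_mirror_near U); assumption).
  assert (Ek : forall x y, U x y -> exdy k x y)
    by (intros x y H; destruct (Hk x y H) as (_&?&_); assumption).
  assert (Ekx : forall x y, U x y -> exdy (dx k) x y)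
    by (intros x y H; destruct (Hk x y H) as (_&_&_&?&_); assumption).
  assert (Eky : forall x y, U x y -> exdy (dy k) x y)
    by (intros x y H; destruct (Hk x y H) as (_&_&_&_&_&?&_); assumption).
  assert (Eyy : forall x y, U x (- y) ->
    eq_near (dy (dy (mirror s k))) (mirror s (dy (dy k))) x y).
  { intros x y Hxy. eapply eq_near_trans; [apply eq_near_dy_near, Ey; eassumption|].
    rewrite <- (Ropp_involutive s) at 2. apply Ey; assumption. }
  split; [|intros x y Hxy; split; apply eq_near_at; [apply Ey|apply Eyy]; assumption].
  intros x y Hxy.
  destruct (Hk x (- y) Hxy) as (k1&k2&k3&k4&k5&k6&k7&k8&k9&k10&k11&k12&k13).
  pose proof (Ey s k Ek x y Hxy) as E1.
  repeat split.
  - apply exdx_mirror; assumption.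
  - eexists; apply is_derive_mirror_y; assumption.
  - rewrite dx_mirror. apply exdx_mirror; assumption.
  - rewrite dx_mirror. eexists; apply is_derive_mirror_y; assumption.
  - eapply eq_near_exdx; [apply eq_near_sym, E1|]. apply exdx_mirror; assumption.
  - eapply eq_near_exdy; [apply eq_near_sym, E1|].
    eexists; apply is_derive_mirror_y; assumption.
  - apply cont2_mirror; assumption.
  - rewrite dx_mirror. apply cont2_mirror; assumption.
  - eapply eq_near_cont2; [apply eq_near_sym, E1|]. apply cont2_mirror; assumption.
  - rewrite !dx_mirror. apply cont2_mirror; assumption.
  - rewrite dx_mirror. eapply eq_near_cont2; [apply eq_near_sym, Ey; eassumption|].
    apply cont2_mirror; assumption.
  - eapply eq_near_cont2; [apply eq_near_sym, eq_near_dx_near, E1|].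
    rewrite dx_mirror. apply cont2_mirror; assumption.
  - eapply eq_near_cont2; [apply eq_near_sym, Eyy, Hxy|]. apply cont2_mirror; assumption.
Qed.

(** * Lorentzian linear algebra *)

Lemma V4_ext u v : c0 u = c0 v -> c1 u = c1 v -> c2 u = c2 v -> c3 u = c3 v -> u = v.
Proof. destruct u, v; simpl; intros; subst; reflexivity. Qed.

Lemma lor_sym u v : lor u v = lor v u.
Proof. unfold lor; ring. Qed.
Lemma lor_vaddl u v w : lor (vadd u v) w = lor u w + lor v w.
Proof. unfold lor, vadd; simpl; ring. Qed.
Lemma lor_vscall k u v : lor (vscal k u) v = k * lor u v.
Proof. unfold lor, vscal; simpl; ring. Qed.
Lemma lor_vscalr k u v : lor u (vscal k v) = k * lor u v.
Proof. unfold lor, vscal; simpl; ring. Qed.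

Lemma lor_opp_l u v : lor (vscal (-1) u) v = - lor u v.
Proof. rewrite lor_vscall; ring. Qed.

Lemma lor_opp_r u v : lor u (vscal (-1) v) = - lor u v.
Proof. rewrite lor_vscalr; ring. Qed.

Definition det3 (a b c d e f g h i : R) : R :=
  a * (e * i - f * h) - b * (d * i - f * g) + c * (d * h - e * g).

Definition det4 (u v w z : V4) : R :=
    c0 u * det3 (c1 v) (c2 v) (c3 v) (c1 w) (c2 w) (c3 w) (c1 z) (c2 z) (c3 z)
  - c1 u * det3 (c0 v) (c2 v) (c3 v) (c0 w) (c2 w) (c3 w) (c0 z) (c2 z) (c3 z)
  + c2 u * det3 (c0 v) (c1 v) (c3 v) (c0 w) (c1 w) (c3 w) (c0 z) (c1 z) (c3 z)
  - c3 u * det3 (c0 v) (c1 v) (c2 v) (c0 w) (c1 w) (c2 w) (c0 z) (c1 z) (c2 z).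

Definition gram_row (u u1 u2 u3 u4 : V4) : V4 := mk4 (lor u u1) (lor u u2) (lor u u3) (lor u u4).

(* Gram determinant of the Lorentz form: [det (M eta M^T) = det eta * (det M) ^ 2]. *)
Lemma det4_gram u1 u2 u3 u4 :
  det4 (gram_row u1 u1 u2 u3 u4) (gram_row u2 u1 u2 u3 u4)
       (gram_row u3 u1 u2 u3 u4) (gram_row u4 u1 u2 u3 u4) = - det4 u1 u2 u3 u4 ^ 2.
Proof.
  destruct u1, u2, u3, u4. unfold det4, det3, gram_row, lor; simpl. ring.
Qed.

Lemma det4_cramer u1 u2 u3 u4 w :
  vscal (det4 u1 u2 u3 u4) w =
  vadd (vadd (vscal (det4 w u2 u3 u4) u1) (vscal (det4 u1 w u3 u4) u2))
       (vadd (vscal (det4 u1 u2 w u4) u3) (vscal (det4 u1 u2 u3 w) u4)).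
Proof.
  destruct u1, u2, u3, u4, w.
  apply V4_ext; unfold det4, det3, vadd, vscal; simpl; ring.
Qed.

Lemma det4_orthogonal_frame u1 u2 u3 u4 :
  lor u1 u1 * lor u2 u2 * lor u3 u3 * lor u4 u4 <> 0 ->
  lor u1 u2 = 0 -> lor u1 u3 = 0 -> lor u1 u4 = 0 ->
  lor u2 u3 = 0 -> lor u2 u4 = 0 -> lor u3 u4 = 0 ->
  det4 u1 u2 u3 u4 <> 0.
Proof.
  intros Hd h12 h13 h14 h23 h24 h34 Hz. apply Hd.
  pose proof (det4_gram u1 u2 u3 u4) as G. unfold gram_row in G.
  rewrite (lor_sym u2 u1), (lor_sym u3 u1), (lor_sym u4 u1), (lor_sym u3 u2),
    (lor_sym u4 u2), (lor_sym u4 u3), h12, h13, h14, h23, h24, h34, Hz in G.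
  unfold det4, det3 in G; simpl in G. nra.
Qed.

Lemma orthogonal_frame_complement u1 u2 u3 u4 w :
  lor u1 u1 * lor u2 u2 * lor u3 u3 * lor u4 u4 <> 0 ->
  lor u1 u2 = 0 -> lor u1 u3 = 0 -> lor u1 u4 = 0 ->
  lor u2 u3 = 0 -> lor u2 u4 = 0 -> lor u3 u4 = 0 ->
  lor w u1 = 0 -> lor w u2 = 0 -> lor w u3 = 0 -> lor w u4 = 0 ->
  w = mk4 0 0 0 0.
Proof.
  intros Hd h12 h13 h14 h23 h24 h34 w1 w2 w3 w4.
  pose proof (det4_orthogonal_frame u1 u2 u3 u4 Hd h12 h13 h14 h23 h24 h34) as HD.
  assert (N1 : lor u1 u1 <> 0) by (intros Hz; apply Hd; rewrite Hz; ring).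
  assert (N2 : lor u2 u2 <> 0) by (intros Hz; apply Hd; rewrite Hz; ring).
  assert (N3 : lor u3 u3 <> 0) by (intros Hz; apply Hd; rewrite Hz; ring).
  assert (N4 : lor u4 u4 <> 0) by (intros Hz; apply Hd; rewrite Hz; ring).
  pose proof (det4_cramer u1 u2 u3 u4 w) as C.
  assert (Hpair : forall u, lor (vscal (det4 u1 u2 u3 u4) w) u =
    det4 w u2 u3 u4 * lor u1 u + det4 u1 w u3 u4 * lor u2 u +
    det4 u1 u2 w u4 * lor u3 u + det4 u1 u2 u3 w * lor u4 u)
    by (intros u; rewrite C, !lor_vaddl, !lor_vscall; ring).
  pose proof (Hpair u1) as P1; pose proof (Hpair u2) as P2;
  pose proof (Hpair u3) as P3; pose proof (Hpair u4) as P4.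
  rewrite lor_vscall in P1, P2, P3, P4.
  rewrite (lor_sym u2 u1), (lor_sym u3 u1), (lor_sym u4 u1), (lor_sym u3 u2),
    (lor_sym u4 u2), (lor_sym u4 u3), h12, h13, h14, h23, h24, h34 in *.
  rewrite w1 in P1; rewrite w2 in P2; rewrite w3 in P3; rewrite w4 in P4.
  assert (D1 : det4 w u2 u3 u4 = 0) by (apply (Rmult_eq_reg_r (lor u1 u1)); auto; lra).
  assert (D2 : det4 u1 w u3 u4 = 0) by (apply (Rmult_eq_reg_r (lor u2 u2)); auto; lra).
  assert (D3 : det4 u1 u2 w u4 = 0) by (apply (Rmult_eq_reg_r (lor u3 u3)); auto; lra).
  assert (D4 : det4 u1 u2 u3 w = 0) by (apply (Rmult_eq_reg_r (lor u4 u4)); auto; lra).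
  rewrite D1, D2, D3, D4 in C.
  apply V4_ext; simpl; apply (Rmult_eq_reg_l (det4 u1 u2 u3 u4)); auto;
    [apply (f_equal c0) in C|apply (f_equal c1) in C|apply (f_equal c2) in C|
     apply (f_equal c3) in C]; simpl in C; lra.
Qed.

Lemma lor_sigma a u v : lor a a = 1 -> lor (sigma a u) (sigma a v) = lor u v.
Proof.
  intros Haa. transitivity (lor u v + 4 * lor u a * lor v a * (lor a a - 1)).
  - unfold sigma, vadd, vscal, lor; simpl; ring.
  - rewrite Haa; ring.
Qed.

Lemma c3_sigma a p : c3 a = 0 -> c3 (sigma a p) = c3 p.
Proof. intros H. unfold sigma, vadd, vscal; simpl. rewrite H. ring. Qed.

Lemma Nvec_sigma a p : c3 a = 0 -> Nvec (sigma a p) = sigma a (Nvec p).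
Proof. intros H. apply V4_ext; unfold sigma, vadd, vscal, Nvec, lor; simpl; rewrite H; ring. Qed.

Lemma sigma_fix a p : lor p a = 0 -> sigma a p = p.
Proof. intros H. apply V4_ext; unfold sigma, vadd, vscal; simpl; rewrite H; ring. Qed.

Lemma sigma_scal a k : lor a a = 1 -> sigma a (vscal k a) = vscal (- k) a.
Proof.
  intros Haa. unfold sigma. rewrite lor_vscall, Haa.
  apply V4_ext; unfold vadd, vscal; simpl; ring.
Qed.

Lemma sigma_vadd a u v : sigma a (vadd u v) = vadd (sigma a u) (sigma a v).
Proof. apply V4_ext; unfold sigma, vadd, vscal, lor; simpl; ring. Qed.

Lemma hyperboloid_same_sheet p0 p1 p2 q0 q1 q2 :
  0 < p0 -> - p0 ^ 2 + p1 ^ 2 + p2 ^ 2 = -1 -> - q0 ^ 2 + q1 ^ 2 + q2 ^ 2 = -1 ->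
  - p0 * q0 + p1 * q1 + p2 * q2 < 0 -> 0 < q0.
Proof.
  intros Hp Hpp Hqq Hpq. destruct (Rlt_or_le 0 q0) as [|Hq]; [assumption|exfalso].
  assert (Hpos : p0 * q0 <= 0) by nra.
  assert (Hsq : (p0 * q0) ^ 2 = (p1 * q1 + p2 * q2) ^ 2 + (p1 * q2 - p2 * q1) ^ 2
                                + 1 + p1 ^ 2 + p2 ^ 2 + q1 ^ 2 + q2 ^ 2).
  { replace ((p0 * q0) ^ 2) with (p0 ^ 2 * q0 ^ 2) by ring.
    replace (p0 ^ 2) with (1 + p1 ^ 2 + p2 ^ 2) by lra.
    replace (q0 ^ 2) with (1 + q1 ^ 2 + q2 ^ 2) by lra. ring. }
  assert (Hlt : (p0 * q0) ^ 2 < (p1 * q1 + p2 * q2) ^ 2) by nra.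
  pose proof (pow2_ge_0 (p1 * q2 - p2 * q1)); pose proof (pow2_ge_0 p1);
  pose proof (pow2_ge_0 p2); pose proof (pow2_ge_0 q1); pose proof (pow2_ge_0 q2).
  lra.
Qed.

Lemma sigma_in_H2xR a p : vertical_plane a -> in_H2xR p -> in_H2xR (sigma a p).
Proof.
  intros [Ha3 Haa] [Hp Hp0].
  assert (Hnorm : forall q, lor (Nvec q) (Nvec q) = - c0 q ^ 2 + c1 q ^ 2 + c2 q ^ 2)
    by (intros; unfold lor, Nvec; simpl; ring).
  assert (Hs : - c0 (sigma a p) ^ 2 + c1 (sigma a p) ^ 2 + c2 (sigma a p) ^ 2 = -1)
    by (rewrite <- Hnorm, Nvec_sigma, lor_sigma, Hnorm; auto).
  split; [exact Hs|].
  assert (Hl : lor (Nvec p) (Nvec (sigma a p)) < 0).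
  { rewrite Nvec_sigma by auto.
    replace (lor (Nvec p) (sigma a (Nvec p)))
      with (lor (Nvec p) (Nvec p) - 2 * lor (Nvec p) a ^ 2)
      by (unfold sigma, vadd, vscal, lor; simpl; ring).
    rewrite Hnorm. pose proof (pow2_ge_0 (lor (Nvec p) a)). lra. }
  unfold lor, Nvec in Hl; cbn [c0 c1 c2 c3] in Hl.
  apply (hyperboloid_same_sheet (c0 p) (c1 p) (c2 p) _ (c1 (sigma a p)) (c2 (sigma a p)));
    auto; lra.
Qed.

(** * Linear functionals of vector-valued maps *)

Definition linv (m v : V4) : R := c0 m * c0 v + c1 m * c1 v + c2 m * c2 v + c3 m * c3 v.

Lemma linv_vadd m u v : linv m (vadd u v) = linv m u + linv m v.
Proof. unfold linv, vadd; simpl; ring. Qed.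

Lemma linv_vscal m k v : linv m (vscal k v) = k * linv m v.
Proof. unfold linv, vscal; simpl; ring. Qed.

(* Transpose of [sigma a] for [linv]: the coordinates of [sigma a (f x y)] are
   linear functionals of [f x y]. *)
Definition sigma_dual (a m : V4) : V4 :=
  vadd m (vscal (-2 * linv m a) (mk4 (- c0 a) (c1 a) (c2 a) (c3 a))).

Lemma linv_sigma_dual a m v : linv (sigma_dual a m) v = linv m (sigma a v).
Proof. unfold sigma_dual, sigma, linv, vadd, vscal, lor; simpl; ring. Qed.

Definition lin (m : V4) (f : R -> R -> V4) : R -> R -> R := fun x y => linv m (f x y).

Definition exdxV f x y :=
  exdx (cmp0 f) x y /\ exdx (cmp1 f) x y /\ exdx (cmp2 f) x y /\ exdx (cmp3 f) x y.
Definition exdyV f x y :=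
  exdy (cmp0 f) x y /\ exdy (cmp1 f) x y /\ exdy (cmp2 f) x y /\ exdy (cmp3 f) x y.
Definition cont2V f x y :=
  cont2 (cmp0 f) x y /\ cont2 (cmp1 f) x y /\ cont2 (cmp2 f) x y /\ cont2 (cmp3 f) x y.

Lemma is_derive_lin_x m f x y :
  exdxV f x y -> is_derive (fun t => lin m f t y) x (linv m (DX f x y)).
Proof.
  intros Hf.
  change (is_derive (fun t => c0 m * cmp0 f t y + c1 m * cmp1 f t y + c2 m * cmp2 f t y
                              + c3 m * cmp3 f t y) x (linv m (DX f x y))).
  auto_derive; [destruct Hf as (?&?&?&?); repeat split; assumption|].
  unfold linv, DX, dx; simpl; ring.
Qed.

Lemma is_derive_lin_y m f x y :
  exdyV f x y -> is_derive (fun t => lin m f x t) y (linv m (DY f x y)).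
Proof.
  intros Hf.
  change (is_derive (fun t => c0 m * cmp0 f x t + c1 m * cmp1 f x t + c2 m * cmp2 f x t
                              + c3 m * cmp3 f x t) y (linv m (DY f x y))).
  auto_derive; [destruct Hf as (?&?&?&?); repeat split; assumption|].
  unfold linv, DY, dy; simpl; ring.
Qed.

Lemma cont2_lin m f x y : cont2V f x y -> cont2 (lin m f) x y.
Proof.
  intros (h0&h1&h2&h3). unfold lin, linv.
  apply (cont2_plus (fun x y => _ + _ + _)); [apply (cont2_plus (fun x y => _ + _));
    [apply cont2_plus|]|]; apply (cont2_scal _ (fun x y => _ (f x y))); assumption.
Qed.

Lemma lin_dx_near (U : R -> R -> Prop) m g x y : open2 U -> U x y ->
  (forall x y, U x y -> exdxV g x y) -> eq_near (dx (lin m g)) (lin m (DX g)) x y.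
Proof.
  intros HU Hxy Hg. apply (eq_near_open U); [exact HU|exact Hxy|]. intros x' y' H'.
  apply is_derive_unique, is_derive_lin_x, Hg, H'.
Qed.

Lemma lin_dy_near (U : R -> R -> Prop) m g x y : open2 U -> U x y ->
  (forall x y, U x y -> exdyV g x y) -> eq_near (dy (lin m g)) (lin m (DY g)) x y.
Proof.
  intros HU Hxy Hg. apply (eq_near_open U); [exact HU|exact Hxy|]. intros x' y' H'.
  apply is_derive_unique, is_derive_lin_y, Hg, H'.
Qed.

Section LinearFunctional.

Variables (U : R -> R -> Prop) (f : R -> R -> V4).
Hypotheses (HU : open2 U) (Hf : C2V f U).

Lemma C2V_parts x y : U x y ->
  exdxV f x y /\ exdyV f x y /\ exdxV (DX f) x y /\ exdyV (DX f) x y /\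
  exdxV (DY f) x y /\ exdyV (DY f) x y /\
  cont2V f x y /\ cont2V (DX f) x y /\ cont2V (DY f) x y /\
  cont2V (DX (DX f)) x y /\ cont2V (DY (DX f)) x y /\
  cont2V (DX (DY f)) x y /\ cont2V (DY (DY f)) x y.
Proof.
  intros Hxy. destruct Hf as (H0&H1&H2&H3).
  pose proof (H0 x y Hxy); pose proof (H1 x y Hxy); pose proof (H2 x y Hxy);
  pose proof (H3 x y Hxy).
  unfold exdxV, exdyV, cont2V; cbv [cmp0 cmp1 cmp2 cmp3 DX DY c0 c1 c2 c3]. tauto.
Qed.

Let Ex m x y : U x y -> eq_near (dx (lin m f)) (lin m (DX f)) x y.
Proof.
  intros Hxy. apply (lin_dx_near U); [exact HU|exact Hxy|].
  intros x' y' H'. destruct (C2V_parts x' y' H') as (?&_). assumption.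
Qed.

Let Ey m x y : U x y -> eq_near (dy (lin m f)) (lin m (DY f)) x y.
Proof.
  intros Hxy. apply (lin_dy_near U); [exact HU|exact Hxy|].
  intros x' y' H'. destruct (C2V_parts x' y' H') as (_&?&_). assumption.
Qed.

Let Exx m x y : U x y -> eq_near (dx (dx (lin m f))) (lin m (DX (DX f))) x y.
Proof.
  intros Hxy. eapply eq_near_trans; [apply eq_near_dx_near, Ex, Hxy|].
  apply (lin_dx_near U); [exact HU|exact Hxy|].
  intros x' y' H'. destruct (C2V_parts x' y' H') as (_&_&?&_). assumption.
Qed.

Let Eyx m x y : U x y -> eq_near (dy (dx (lin m f))) (lin m (DY (DX f))) x y.
Proof.
  intros Hxy. eapply eq_near_trans; [apply eq_near_dy_near, Ex, Hxy|].
  apply (lin_dy_near U); [exact HU|exact Hxy|].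
  intros x' y' H'. destruct (C2V_parts x' y' H') as (_&_&_&?&_). assumption.
Qed.

Let Exy m x y : U x y -> eq_near (dx (dy (lin m f))) (lin m (DX (DY f))) x y.
Proof.
  intros Hxy. eapply eq_near_trans; [apply eq_near_dx_near, Ey, Hxy|].
  apply (lin_dx_near U); [exact HU|exact Hxy|].
  intros x' y' H'. destruct (C2V_parts x' y' H') as (_&_&_&_&?&_). assumption.
Qed.

Let Eyy m x y : U x y -> eq_near (dy (dy (lin m f))) (lin m (DY (DY f))) x y.
Proof.
  intros Hxy. eapply eq_near_trans; [apply eq_near_dy_near, Ey, Hxy|].
  apply (lin_dy_near U); [exact HU|exact Hxy|].
  intros x' y' H'. destruct (C2V_parts x' y' H') as (_&_&_&_&_&?&_). assumption.
Qed.

Lemma C2_lin m : C2 (lin m f) U.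
Proof.
  intros x y Hxy.
  destruct (C2V_parts x y Hxy) as (p1&p2&p3&p4&p5&p6&p7&p8&p9&p10&p11&p12&p13).
  repeat split.
  - eexists; apply is_derive_lin_x, p1.
  - eexists; apply is_derive_lin_y, p2.
  - eapply eq_near_exdx; [apply eq_near_sym, Ex, Hxy|]. eexists; apply is_derive_lin_x, p3.
  - eapply eq_near_exdy; [apply eq_near_sym, Ex, Hxy|]. eexists; apply is_derive_lin_y, p4.
  - eapply eq_near_exdx; [apply eq_near_sym, Ey, Hxy|]. eexists; apply is_derive_lin_x, p5.
  - eapply eq_near_exdy; [apply eq_near_sym, Ey, Hxy|]. eexists; apply is_derive_lin_y, p6.
  - apply cont2_lin, p7.
  - eapply eq_near_cont2; [apply eq_near_sym, Ex, Hxy|]. apply cont2_lin, p8.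
  - eapply eq_near_cont2; [apply eq_near_sym, Ey, Hxy|]. apply cont2_lin, p9.
  - eapply eq_near_cont2; [apply eq_near_sym, Exx, Hxy|]. apply cont2_lin, p10.
  - eapply eq_near_cont2; [apply eq_near_sym, Eyx, Hxy|]. apply cont2_lin, p11.
  - eapply eq_near_cont2; [apply eq_near_sym, Exy, Hxy|]. apply cont2_lin, p12.
  - eapply eq_near_cont2; [apply eq_near_sym, Eyy, Hxy|]. apply cont2_lin, p13.
Qed.

Lemma lin_derivatives m x y : U x y ->
  dx (lin m f) x y = linv m (DX f x y) /\ dy (lin m f) x y = linv m (DY f x y) /\
  dx (dx (lin m f)) x y = linv m (DX (DX f) x y) /\
  dy (dy (lin m f)) x y = linv m (DY (DY f) x y).
Proof.
  intros Hxy.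
  exact (conj (eq_near_at _ _ _ _ (Ex m x y Hxy)) (conj (eq_near_at _ _ _ _ (Ey m x y Hxy))
    (conj (eq_near_at _ _ _ _ (Exx m x y Hxy)) (eq_near_at _ _ _ _ (Eyy m x y Hxy))))).
Qed.

End LinearFunctional.

Lemma cmp_as_lin f :
  cmp0 f = lin (mk4 1 0 0 0) f /\ cmp1 f = lin (mk4 0 1 0 0) f /\
  cmp2 f = lin (mk4 0 0 1 0) f /\ cmp3 f = lin (mk4 0 0 0 1) f.
Proof.
  split; [|split; [|split]];
    apply functional_extensionality; intro x; apply functional_extensionality; intro y;
    unfold cmp0, cmp1, cmp2, cmp3, lin, linv; simpl; ring.
Qed.

Lemma DX_of_lin f x y v : (forall m, dx (lin m f) x y = linv m v) -> DX f x y = v.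
Proof.
  intros H. destruct (cmp_as_lin f) as (E0&E1&E2&E3). unfold DX. rewrite E0, E1, E2, E3.
  apply V4_ext; simpl; rewrite H; unfold linv; simpl; ring.
Qed.

Lemma DY_of_lin f x y v : (forall m, dy (lin m f) x y = linv m v) -> DY f x y = v.
Proof.
  intros H. destruct (cmp_as_lin f) as (E0&E1&E2&E3). unfold DY. rewrite E0, E1, E2, E3.
  apply V4_ext; simpl; rewrite H; unfold linv; simpl; ring.
Qed.

Lemma LapV_of_lin f x y v :
  (forall m, dx (dx (lin m f)) x y + dy (dy (lin m f)) x y = linv m v) -> LapV f x y = v.
Proof.
  intros H. destruct (cmp_as_lin f) as (E0&E1&E2&E3). unfold LapV. rewrite E0, E1, E2, E3.
  apply V4_ext; simpl; rewrite H; unfold linv; simpl; ring.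
Qed.

(** * Curves in L^4 *)

Definition is_derive4 (u : R -> V4) t (u' : V4) :=
  is_derive (fun s => c0 (u s)) t (c0 u') /\ is_derive (fun s => c1 (u s)) t (c1 u') /\
  is_derive (fun s => c2 (u s)) t (c2 u') /\ is_derive (fun s => c3 (u s)) t (c3 u').

Lemma is_derive_lor u v t u' v' : is_derive4 u t u' -> is_derive4 v t v' ->
  is_derive (fun s => lor (u s) (v s)) t (lor u' (v t) + lor (u t) v').
Proof.
  intros (a0&a1&a2&a3) (b0&b1&b2&b3).
  assert (E : forall s, (-1) * (c0 (u s) * c0 (v s)) + c1 (u s) * c1 (v s)
                        + c2 (u s) * c2 (v s) + c3 (u s) * c3 (v s) = lor (u s) (v s))
    by (intros; unfold lor; ring).
  eapply is_derive_ext; [exact E|].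
  replace (lor u' (v t) + lor (u t) v')
    with ((-1) * (c0 u' * c0 (v t) + c0 (u t) * c0 v') + (c1 u' * c1 (v t) + c1 (u t) * c1 v')
          + (c2 u' * c2 (v t) + c2 (u t) * c2 v') + (c3 u' * c3 (v t) + c3 (u t) * c3 v'))
    by (unfold lor; ring).
  apply is_derive_Rplus; [apply is_derive_Rplus; [apply is_derive_Rplus|]|];
    [apply is_derive_scal| | |]; apply is_derive_Rmult; assumption.
Qed.

Lemma is_derive4_x f x y : exdxV f x y -> is_derive4 (fun t => f t y) x (DX f x y).
Proof. intros (a0&a1&a2&a3). split; [|split; [|split]]; apply Derive_correct; assumption. Qed.

Lemma is_derive4_y f x y : exdyV f x y -> is_derive4 (fun t => f x t) y (DY f x y).
Proof. intros (a0&a1&a2&a3). split; [|split; [|split]]; apply Derive_correct; assumption. Qed.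

Lemma is_derive4_const (p : V4) t : is_derive4 (fun _ => p) t (mk4 0 0 0 0).
Proof. split; [|split; [|split]]; exact (is_derive_const _ _). Qed.

Lemma is_derive4_Nvec u t u' : is_derive4 u t u' -> is_derive4 (fun s => Nvec (u s)) t (Nvec u').
Proof.
  intros (a0&a1&a2&a3).
  split; [|split; [|split]]; [exact a0|exact a1|exact a2|exact (is_derive_const _ _)].
Qed.

Lemma lor_right_const u v t u' v' e : is_derive4 u t u' -> is_derive4 v t v' -> 0 < e ->
  (forall s, t <= s < t + e -> lor (u s) (v s) = lor (u t) (v t)) ->
  lor u' (v t) + lor (u t) v' = 0.
Proof.
  intros Hu Hv He Hc.
  exact (is_derive_right_const _ _ _ e (is_derive_lor _ _ _ _ _ Hu Hv) He Hc).
Qed.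

Lemma orthogonal_right_const u t u' p e : is_derive4 u t u' -> 0 < e ->
  (forall s, t <= s < t + e -> lor (u s) p = 0) -> lor u' p = 0.
Proof.
  intros Hu He Hc.
  pose proof (lor_right_const u (fun _ => p) t u' _ e Hu (is_derive4_const p t) He) as H.
  assert (Z : lor (u t) (mk4 0 0 0 0) = 0) by (unfold lor; simpl; ring).
  cbv beta in H. rewrite Z, Rplus_0_r in H. apply H.
  intros s Hs. rewrite !Hc; lra.
Qed.

Lemma tangent_H2xR_orthogonal u t u' e : is_derive4 u t u' -> 0 < e ->
  (forall s, t <= s < t + e -> in_H2xR (u s)) -> lor u' (Nvec (u t)) = 0.
Proof.
  intros Hu He Hc. pose proof (is_derive4_Nvec _ _ _ Hu) as HN.
  assert (Hnorm : forall s, t <= s < t + e -> lor (Nvec (u s)) (Nvec (u s)) = -1).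
  { intros s Hs. destruct (Hc s Hs) as [Hs' _]. unfold lor, Nvec; simpl. lra. }
  pose proof (lor_right_const _ _ t _ _ e HN HN He) as H.
  replace (lor u' (Nvec (u t))) with ((lor (Nvec u') (Nvec (u t)) + lor (Nvec (u t)) (Nvec u')) / 2)
    by (unfold lor, Nvec; simpl; field).
  rewrite H; [field|]. intros s Hs. rewrite !Hnorm; lra.
Qed.

Lemma DX_DY_comm (U : R -> R -> Prop) f x y :
  open2 U -> C2V f U -> U x y -> DX (DY f) x y = DY (DX f) x y.
Proof.
  intros HU (H0&H1&H2&H3) Hxy.
  apply V4_ext; simpl; symmetry; eapply dy_dx_comm; eassumption.
Qed.

(** * The reflected surface *)

Lemma lin_reflected a m psi :
  lin m (reflected a psi) = glue (lin m psi) (mirror 1 (lin (sigma_dual a m) psi)).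
Proof.
  apply functional_extensionality; intro x; apply functional_extensionality; intro y.
  unfold lin, reflected, glue, mirror. destruct (Rle_dec 0 y); [reflexivity|].
  rewrite linv_sigma_dual. ring.
Qed.

Section Reflection.

Variables (Omega U : R -> R -> Prop) (a : V4) (psi : R -> R -> V4).
Hypotheses (HO : open2 Omega) (Hsym : forall x y, Omega x y -> Omega x (- y))
  (HU : open2 U) (HOU : forall x y, Omega x y -> 0 <= y -> U x y)
  (HC : C2V psi U) (Ha : vertical_plane a)
  (Hconf : forall x y, Omega x y -> 0 <= y -> conformal_immersion_at psi x y)
  (Hplane : forall x, Omega x 0 -> in_plane a (psi x 0))
  (Hnormal : forall x, Omega x 0 -> exists n, unit_normal psi x 0 n /\ lor n a = 0).

Lemma axis_half_lines x : Omega x 0 -> exists e, 0 < e /\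
  (forall s, x <= s < x + e -> Omega s 0) /\ (forall r, 0 <= r < e -> Omega x r).
Proof.
  intros Hx. destruct (HO x 0 Hx) as [e [He Hb]]. exists e; repeat split; auto;
    intros s Hs; apply Hb; rewrite ?Rminus_diag, ?Rminus_0_r, ?Rabs_R0;
    try apply Rabs_def1; lra.
Qed.

Lemma psi_parts x y : Omega x y -> 0 <= y ->
  exdxV psi x y /\ exdyV psi x y /\ exdxV (DX psi) x y /\ exdyV (DX psi) x y /\
  exdxV (DY psi) x y /\ exdyV (DY psi) x y.
Proof.
  intros Hxy Hy. destruct (C2V_parts U psi HC x y (HOU x y Hxy Hy)) as (p1&p2&p3&p4&p5&p6&_).
  exact (conj p1 (conj p2 (conj p3 (conj p4 (conj p5 p6))))).
Qed.

Lemma DX_orthogonal_plane x : Omega x 0 -> lor (DX psi x 0) a = 0.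
Proof.
  intros Hx. destruct (axis_half_lines x Hx) as [e [He [Hs _]]].
  destruct (psi_parts x 0 Hx (Rle_refl 0)) as (px&_).
  apply (orthogonal_right_const (fun t => psi t 0) x _ a e (is_derive4_x psi x 0 px) He).
  intros s Hs'. apply Hplane, Hs, Hs'.
Qed.

Lemma DXX_orthogonal_plane x : Omega x 0 -> lor (DX (DX psi) x 0) a = 0.
Proof.
  intros Hx. destruct (axis_half_lines x Hx) as [e [He [Hs _]]].
  destruct (psi_parts x 0 Hx (Rle_refl 0)) as (_&_&pxx&_).
  apply (orthogonal_right_const (fun t => DX psi t 0) x _ a e (is_derive4_x _ x 0 pxx) He).
  intros s Hs'. apply DX_orthogonal_plane, Hs, Hs'.
Qed.

Lemma tangent_orthogonal_Nvec x : Omega x 0 ->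
  lor (DX psi x 0) (Nvec (psi x 0)) = 0 /\ lor (DY psi x 0) (Nvec (psi x 0)) = 0.
Proof.
  intros Hx. destruct (axis_half_lines x Hx) as [e [He [Hs Hr]]].
  destruct (psi_parts x 0 Hx (Rle_refl 0)) as (px&py&_).
  split.
  - apply (tangent_H2xR_orthogonal (fun t => psi t 0) x _ e (is_derive4_x psi x 0 px) He).
    intros s Hs'. apply Hconf; [apply Hs, Hs'|lra].
  - apply (tangent_H2xR_orthogonal (fun t => psi x t) 0 _ e (is_derive4_y psi x 0 py) He).
    intros r Hr'. apply Hconf; [apply Hr; lra|lra].
Qed.

Lemma LapV_orthogonal_DY x : Omega x 0 -> lor (LapV psi x 0) (DY psi x 0) = 0.
Proof.
  intros Hx. destruct (axis_half_lines x Hx) as [e [He [Hs Hr]]].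
  destruct (psi_parts x 0 Hx (Rle_refl 0)) as (_&_&pxx&pyx&pxy&pyy).
  assert (Hx' : lor (DX (DX psi) x 0) (DY psi x 0) + lor (DX psi x 0) (DX (DY psi) x 0) = 0).
  { apply (lor_right_const (fun t => DX psi t 0) (fun t => DY psi t 0) x _ _ e
             (is_derive4_x _ x 0 pxx) (is_derive4_x _ x 0 pxy) He).
    intros s Hs'. destruct (Hconf s 0 (Hs s Hs') (Rle_refl 0)) as (_&_&H&_).
    destruct (Hconf x 0 Hx (Rle_refl 0)) as (_&_&H'&_). rewrite H, H'. reflexivity. }
  assert (Hy' : (lor (DY (DX psi) x 0) (DX psi x 0) + lor (DX psi x 0) (DY (DX psi) x 0))
                + (-1) * (lor (DY (DY psi) x 0) (DY psi x 0) + lor (DY psi x 0) (DY (DY psi) x 0))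
                = 0).
  { apply (is_derive_right_const
      (fun t => lor (DX psi x t) (DX psi x t) + (-1) * lor (DY psi x t) (DY psi x t)) 0 _ e).
    - apply is_derive_Rplus; [|apply is_derive_scal]; apply is_derive_lor;
        apply is_derive4_y; assumption.
    - exact He.
    - intros r Hr'. destruct (Hconf x r (Hr r ltac:(lra)) (proj1 Hr')) as (_&H&_).
      destruct (Hconf x 0 Hx (Rle_refl 0)) as (_&H'&_). rewrite H, H'. ring. }
  rewrite (DX_DY_comm U psi x 0 HU HC (HOU x 0 Hx (Rle_refl 0))) in Hx'.
  change (LapV psi x 0) with (vadd (DX (DX psi) x 0) (DY (DY psi) x 0)).
  rewrite lor_vaddl.
  rewrite (lor_sym (DX psi x 0)), (lor_sym (DY psi x 0)) in Hy'.
  rewrite (lor_sym (DX psi x 0)) in Hx'.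
  lra.
Qed.

Section NormalOnAxis.

Variables (x : R) (n : V4).
Hypotheses (Hx : Omega x 0) (Hn : unit_normal psi x 0 n) (Hna : lor n a = 0).

Lemma DY_parallel_plane : DY psi x 0 = vscal (lor (DY psi x 0) a) a.
Proof.
  destruct Ha as [Ha3 Haa].
  destruct Hn as (nN & nn & nX & nY).
  destruct (Hconf x 0 Hx (Rle_refl 0)) as ((HH & _) & _ & XY & XX).
  destruct (tangent_orthogonal_Nvec x Hx) as [XN YN].
  pose proof (DX_orthogonal_plane x Hx) as Xa.
  assert (Na : lor (Nvec (psi x 0)) a = lor (psi x 0) a)
    by (unfold lor, Nvec; simpl; rewrite Ha3; ring).
  rewrite (proj2 (Hplane x Hx)) in Na.
  assert (NN : lor (Nvec (psi x 0)) (Nvec (psi x 0)) = -1)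
    by (unfold lor, Nvec; simpl; lra).
  assert (nX' : lor (DX psi x 0) n = 0) by (rewrite lor_sym; exact nX).
  assert (nY' : lor (DY psi x 0) n = 0) by (rewrite lor_sym; exact nY).
  assert (XY' : lor (DY psi x 0) (DX psi x 0) = 0) by (rewrite lor_sym; exact XY).
  set (w := vadd (DY psi x 0) (vscal (- lor (DY psi x 0) a) a)).
  assert (Hw : w = mk4 0 0 0 0).
  { apply (orthogonal_frame_complement (DX psi x 0) n (Nvec (psi x 0)) a);
      unfold w; rewrite ?lor_vaddl, ?lor_vscall, ?Haa, ?(lor_sym a), ?Xa, ?Hna, ?Na; try lra.
    rewrite nn, NN. intros Hz. nra. }
  apply V4_ext; unfold w, vadd, vscal in Hw; injection Hw; simpl; lra.
Qed.

Lemma DYY_orthogonal_plane : lor (DY (DY psi) x 0) a = 0.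
Proof.
  destruct Ha as [_ Haa].
  pose proof (LapV_orthogonal_DY x Hx) as L.
  pose proof DY_parallel_plane as P. set (c := lor (DY psi x 0) a) in P.
  destruct (Hconf x 0 Hx (Rle_refl 0)) as (_ & YY & _ & XX).
  rewrite P, lor_vscalr in L. rewrite P, lor_vscall, lor_vscalr, Haa in YY.
  assert (Hc : c <> 0) by (intros Hz; rewrite Hz in YY; lra).
  change (LapV psi x 0) with (vadd (DX (DX psi) x 0) (DY (DY psi) x 0)) in L.
  rewrite lor_vaddl, (DXX_orthogonal_plane x Hx) in L.
  apply (Rmult_eq_reg_l c); [lra|assumption].
Qed.

End NormalOnAxis.

Lemma U_of_lower x y : Omega x y -> y <= 0 -> U x (- y).
Proof. intros Hxy Hy. apply HOU; [apply Hsym, Hxy|lra]. Qed.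

Lemma seam_agree_reflected m x : Omega x 0 ->
  seam_agree (lin m psi) (mirror 1 (lin (sigma_dual a m) psi)) x.
Proof.
  intros Hx.
  (* [sigma] fixes [psi] and [psi_yy] on the axis and negates [psi_y], which
     compensates the sign of [d/dy (- y)]. *)
  destruct (C2_mirror U 1 _ HU (C2_lin U psi HU HC (sigma_dual a m))) as [CM VM].
  assert (U0 : forall t, Omega t 0 -> U t 0) by (intros; apply HOU; [assumption|lra]).
  assert (U0' : forall t, Omega t 0 -> U t (- 0)) by (intros t Ht; rewrite Ropp_0; apply U0, Ht).
  apply (seam_agree_of Omega); [exact HO|exact Hx| | | |].
  - intros t Ht. destruct (VM t 0 (U0' t Ht)) as [VM1 _].
    destruct (lin_derivatives U psi HU HC m t 0 (U0 t Ht)) as (_&D1&_).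
    destruct (lin_derivatives U psi HU HC (sigma_dual a m) t 0 (U0 t Ht)) as (_&D1'&_).
    destruct (Hnormal t Ht) as [n [Hn Hna]].
    pose proof (DY_parallel_plane t n Ht Hn Hna) as P.
    rewrite VM1, D1. unfold mirror. rewrite Ropp_0, D1'. unfold lin.
    rewrite !linv_sigma_dual, (sigma_fix a (psi t 0)) by apply (Hplane t Ht).
    set (c := lor (DY psi t 0) a) in P. rewrite P, sigma_scal, !linv_vscal by apply Ha.
    split; ring.
  - destruct (Hnormal x Hx) as [n [Hn Hna]].
    destruct (lin_derivatives U psi HU HC m x 0 (U0 x Hx)) as (_&_&_&D2).
    destruct (lin_derivatives U psi HU HC (sigma_dual a m) x 0 (U0 x Hx)) as (_&_&_&D2').
    rewrite (proj2 (VM x 0 (U0' x Hx))). unfold mirror. rewrite Ropp_0, D2, D2'.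
    rewrite linv_sigma_dual, sigma_fix by apply (DYY_orthogonal_plane x n Hx Hn Hna). ring.
  - apply (dy_dx_comm _ U); [exact HU|apply C2_lin; assumption|apply U0, Hx].
  - apply (dy_dx_comm _ (fun x y => U x (- y))); [apply open2_mirror, HU|exact CM|apply U0', Hx].
Qed.

Lemma C2_lin_reflected m : C2 (lin m (reflected a psi)) Omega /\ forall x y, Omega x y ->
  dy (lin m (reflected a psi)) x y =
    glue (dy (lin m psi)) (dy (mirror 1 (lin (sigma_dual a m) psi))) x y /\
  dy (dy (lin m (reflected a psi))) x y =
    glue (dy (dy (lin m psi))) (dy (dy (mirror 1 (lin (sigma_dual a m) psi)))) x y.
Proof.
  rewrite lin_reflected. apply (C2_glue Omega); [exact HO| | |exact (seam_agree_reflected m)].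
  - intros x y Hxy Hy. exact (C2_lin U psi HU HC m x y (HOU x y Hxy Hy)).
  - intros x y Hxy Hy.
    exact (proj1 (C2_mirror U 1 _ HU (C2_lin U psi HU HC _)) x y (U_of_lower x y Hxy Hy)).
Qed.

Lemma lin_reflected_derivatives m x y : Omega x y ->
  (0 <= y ->
     dx (lin m (reflected a psi)) x y = linv m (DX psi x y) /\
     dy (lin m (reflected a psi)) x y = linv m (DY psi x y) /\
     dx (dx (lin m (reflected a psi))) x y = linv m (DX (DX psi) x y) /\
     dy (dy (lin m (reflected a psi))) x y = linv m (DY (DY psi) x y)) /\
  (y < 0 ->
     dx (lin m (reflected a psi)) x y = linv m (sigma a (DX psi x (- y))) /\
     dy (lin m (reflected a psi)) x y = - linv m (sigma a (DY psi x (- y))) /\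
     dx (dx (lin m (reflected a psi))) x y = linv m (sigma a (DX (DX psi) x (- y))) /\
     dy (dy (lin m (reflected a psi))) x y = linv m (sigma a (DY (DY psi) x (- y)))).
Proof.
  intros Hxy. destruct (proj2 (C2_lin_reflected m) x y Hxy) as [Vy Vyy].
  rewrite Vy, Vyy, lin_reflected, !dx_glue. split; intros Hy.
  - rewrite !glue_pos by exact Hy.
    exact (lin_derivatives U psi HU HC m x y (HOU x y Hxy Hy)).
  - rewrite !glue_neg by exact Hy.
    destruct (proj2 (C2_mirror U 1 _ HU (C2_lin U psi HU HC (sigma_dual a m))) x y
                (U_of_lower x y Hxy ltac:(lra))) as [M1 M2].
    rewrite M1, M2, !dx_mirror. unfold mirror.
    destruct (lin_derivatives U psi HU HC (sigma_dual a m) x (- y)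
                (U_of_lower x y Hxy ltac:(lra))) as (D1&D2&D3&D4).
    rewrite D1, D2, D3, D4, !linv_sigma_dual. repeat split; ring.
Qed.

Lemma C2V_reflected : C2V (reflected a psi) Omega.
Proof.
  destruct (cmp_as_lin (reflected a psi)) as (E0&E1&E2&E3).
  unfold C2V. rewrite E0, E1, E2, E3.
  split; [|split; [|split]]; exact (proj1 (C2_lin_reflected _)).
Qed.

Lemma reflected_upper x y : Omega x y -> 0 <= y ->
  reflected a psi x y = psi x y /\ DX (reflected a psi) x y = DX psi x y /\
  DY (reflected a psi) x y = DY psi x y /\ LapV (reflected a psi) x y = LapV psi x y.
Proof.
  intros Hxy Hy. pose proof (fun m => proj1 (lin_reflected_derivatives m x y Hxy) Hy) as D.
  split; [|split; [|split]].
  - unfold reflected. destruct (Rle_dec 0 y); [reflexivity|lra].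
  - apply DX_of_lin. intros m. exact (proj1 (D m)).
  - apply DY_of_lin. intros m. exact (proj1 (proj2 (D m))).
  - apply LapV_of_lin. intros m. destruct (D m) as (_&_&->&->).
    symmetry. exact (linv_vadd m (DX (DX psi) x y) (DY (DY psi) x y)).
Qed.

Lemma reflected_lower x y : Omega x y -> y < 0 ->
  reflected a psi x y = sigma a (psi x (- y)) /\
  DX (reflected a psi) x y = sigma a (DX psi x (- y)) /\
  DY (reflected a psi) x y = vscal (-1) (sigma a (DY psi x (- y))) /\
  LapV (reflected a psi) x y = sigma a (LapV psi x (- y)).
Proof.
  intros Hxy Hy. pose proof (fun m => proj2 (lin_reflected_derivatives m x y Hxy) Hy) as D.
  split; [|split; [|split]].
  - unfold reflected. destruct (Rle_dec 0 y); [lra|reflexivity].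
  - apply DX_of_lin. intros m. exact (proj1 (D m)).
  - apply DY_of_lin. intros m. rewrite linv_vscal, (proj1 (proj2 (D m))). ring.
  - apply LapV_of_lin. intros m. destruct (D m) as (_&_&->&->).
    change (LapV psi x (- y)) with (vadd (DX (DX psi) x (- y)) (DY (DY psi) x (- y))).
    rewrite sigma_vadd, linv_vadd. reflexivity.
Qed.

End Reflection.

Section ReflectedPoint.

Variables (a : V4) (f g : R -> R -> V4) (x y x' y' : R).
Hypotheses (Ha : vertical_plane a)
  (Hp : g x y = sigma a (f x' y')) (HX : DX g x y = sigma a (DX f x' y'))
  (HY : DY g x y = vscal (-1) (sigma a (DY f x' y'))).

Lemma conformal_immersion_reflect :
  conformal_immersion_at f x' y' -> conformal_immersion_at g x y.
Proof.
  destruct Ha as [Ha3 Haa]. intros (H1&H2&H3&H4).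
  unfold conformal_immersion_at. rewrite Hp, HX, HY, lor_opp_l, lor_opp_r, lor_opp_r, !lor_sigma
    by exact Haa.
  split; [apply sigma_in_H2xR; assumption|lra].
Qed.

Lemma mean_curvature_reflect H :
  LapV g x y = sigma a (LapV f x' y') ->
  mean_curvature_up_at f H x' y' -> mean_curvature_up_at g H x y.
Proof.
  destruct Ha as [Ha3 Haa]. intros HL [n [(n1&n2&n3&n4) [n5 n6]]].
  exists (sigma a n). unfold unit_normal.
  rewrite Hp, HX, HY, HL, Nvec_sigma, lor_opp_r, !lor_sigma, c3_sigma by assumption.
  repeat split; auto; lra.
Qed.

End ReflectedPoint.

Theorem mainTheorem13 (Omega : R -> R -> Prop) (a : V4) (psi : R -> R -> V4) :
  is_domain Omega ->
  (forall x y, Omega x y -> Omega x (- y)) ->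
  vertical_plane a ->
  (exists U : R -> R -> Prop, open2 U /\
     (forall x y, Omega x y -> 0 <= y -> U x y) /\ C2V psi U) ->
  (forall x y, Omega x y -> 0 <= y -> conformal_immersion_at psi x y) ->
  (forall x y, Omega x y -> 0 <= y -> regular_vertical_projection_at psi x y) ->
  (forall x y, Omega x y -> 0 <= y -> mean_curvature_up_at psi (1/2) x y) ->
  (forall x, Omega x 0 -> in_plane a (psi x 0)) ->
  (forall x, Omega x 0 -> forall n, unit_normal psi x 0 n -> lor n a = 0) ->
  C2V (reflected a psi) Omega /\
  (forall x y, Omega x y ->
     conformal_immersion_at (reflected a psi) x y /\
     mean_curvature_up_at (reflected a psi) (1/2) x y).
Proof.
  intros [HO _] Hsym Ha [U (HU & HOU & HC)] Hconf _ Hmc Hplane Hna.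
  assert (Hnormal : forall x, Omega x 0 -> exists n, unit_normal psi x 0 n /\ lor n a = 0).
  { intros x Hx. destruct (Hmc x 0 Hx (Rle_refl 0)) as [n [Hn _]].
    exists n. split; [exact Hn|exact (Hna x Hx n Hn)]. }
  pose proof (reflected_upper Omega U a psi HO Hsym HU HOU HC Ha Hconf Hplane Hnormal) as Up.
  pose proof (reflected_lower Omega U a psi HO Hsym HU HOU HC Ha Hconf Hplane Hnormal) as Low.
  split; [exact (C2V_reflected Omega U a psi HO Hsym HU HOU HC Ha Hconf Hplane Hnormal)|].
  intros x y Hxy. destruct (Rle_or_lt 0 y) as [Hy|Hy].
  - destruct (Up x y Hxy Hy) as (E & EX & EY & EL).
    unfold conformal_immersion_at, mean_curvature_up_at, unit_normal.
    rewrite E, EX, EY, EL. split; [apply Hconf|apply Hmc]; assumption.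
  - destruct (Low x y Hxy Hy) as (E & EX & EY & EL).
    assert (Hxy' : Omega x (- y)) by (apply Hsym, Hxy).
    split.
    + apply (conformal_immersion_reflect a psi _ x y x (- y)); try assumption.
      apply Hconf; [exact Hxy'|lra].
    + apply (mean_curvature_reflect a psi _ x y x (- y)); try assumption.
      apply Hmc; [exact Hxy'|lra].
Qed.
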